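(* Let $F\colon\Omega\to\Omega$ be a piecewise translation in $\mathbb{R}^d$ with any number $m$ of branches, and let $\mathcal{F}\colon\Omega\to\Sigma$ be its fate map. If $\omega\in\Sigma$ is not eventually periodic (i.e. there are no $n\ge0$, $p\ge1$ with $\sigma^{n+p}\omega=\sigma^n\omega$), then $\mathrm{Leb}(\mathcal{F}^{-1}(\omega))=0$.
   Context: A region is a compact subset of $\mathbb{R}^d$ which equals the closure of its interior. A piecewise translation with $m$ branches: $\Omega\subset\mathbb{R}^d$ is a region, $\Omega=P_0\cup\dots\cup P_{m-1}$ with each $P_i$ a region, distinct $P_i$ intersecting only in boundaries, $\mathrm{Leb}(\partial P_i)=0$; vectors $v_i$ satisfy $x+v_i\in\Omega$ for $x\in P_i$; $i(x)$ is an index with $x\in P_{i(x)}$ (boundary ambiguity resolved by a fixed measurable rule), and $F(x)=x+v_{i(x)}$. $\Sigma=\{0,\dots,m-1\}^{\mathbb{N}_0}$ with left shift $\sigma$. The fate map is $\mathcal{F}(x)=(i(x),i(F(x)),i(F^2(x)),\dots)$; it satisfies $\mathcal{F}\circ F=\sigma\circ\mathcal{F}$. *)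

From Stdlib Require Import Reals.
From Stdlib Require Vectors.Fin.
Open Scope R_scope.

Definition pt (d : nat) := Fin.t d -> R.

Definition vadd {d} (x v : pt d) : pt d := fun k => x k + v k.

(* open sup-norm ball (induces the Euclidean topology) *)
Definition ball {d} (x : pt d) (r : R) (y : pt d) : Prop :=
  forall k, Rabs (y k - x k) < r.

Definition interior {d} (A : pt d -> Prop) (x : pt d) : Prop :=
  exists r, 0 < r /\ forall y, ball x r y -> A y.
Definition closure {d} (A : pt d -> Prop) (x : pt d) : Prop :=
  forall r, 0 < r -> exists y, ball x r y /\ A y.
Definition boundary {d} (A : pt d -> Prop) (x : pt d) : Prop :=
  closure A x /\ ~ interior A x.
Definition is_open {d} (A : pt d -> Prop) : Prop := forall x, A x -> interior A x.
Definition is_closed {d} (A : pt d -> Prop) : Prop := forall x, closure A x -> A x.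
Definition bounded {d} (A : pt d -> Prop) : Prop :=
  exists M, forall x, A x -> forall k, Rabs (x k) <= M.
(* Heine-Borel: compact subsets of R^d are the closed bounded ones *)
Definition compact {d} (A : pt d -> Prop) : Prop := is_closed A /\ bounded A.

Definition region {d} (A : pt d -> Prop) : Prop :=
  compact A /\ forall x, A x <-> closure (interior A) x.

Fixpoint prod_fin (d : nat) : (Fin.t d -> R) -> R :=
  match d with
  | O => fun _ => 1
  | S n => fun f => f Fin.F1 * prod_fin n (fun i => f (Fin.FS i))
  end.

Definition in_box {d} (a b : pt d) (x : pt d) : Prop :=
  forall k, a k <= x k <= b k.
Definition box_vol {d} (a b : pt d) : R := prod_fin d (fun k => b k - a k).

(* Lebesgue outer measure of A is at most eps: A is covered by countably many
   closed boxes of total volume <= eps *)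
Definition outer_le {d} (A : pt d -> Prop) (eps : R) : Prop :=
  exists a b : nat -> pt d,
    (forall n k, a n k <= b n k) /\
    (forall x, A x -> exists n, in_box (a n) (b n) x) /\
    (forall N, sum_f_R0 (fun n => box_vol (a n) (b n)) N <= eps).

Definition leb_null {d} (A : pt d -> Prop) : Prop :=
  forall eps, 0 < eps -> outer_le A eps.

(* Lebesgue measurability (outer regularity characterization) *)
Definition leb_measurable {d} (E : pt d -> Prop) : Prop :=
  forall eps, 0 < eps -> exists U, is_open U /\ (forall x, E x -> U x) /\
    outer_le (fun x => U x /\ ~ E x) eps.

Definition piecewise_translation {d} (Omega : pt d -> Prop) (m : nat)
  (P : nat -> pt d -> Prop) (v : nat -> pt d) (i : pt d -> nat) : Prop :=
  region Omega /\
  (forall k, (k < m)%nat -> region (P k)) /\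
  (forall x, Omega x <-> exists k, (k < m)%nat /\ P k x) /\
  (forall k l x, (k < m)%nat -> (l < m)%nat -> k <> l -> P k x -> P l x ->
      boundary (P k) x /\ boundary (P l) x) /\
  (forall k, (k < m)%nat -> leb_null (boundary (P k))) /\
  (forall k x, (k < m)%nat -> P k x -> Omega (vadd x (v k))) /\
  (forall x, Omega x -> (i x < m)%nat /\ P (i x) x) /\
  (forall k, (k < m)%nat -> leb_measurable (fun x => Omega x /\ i x = k)).

Definition pt_map {d} (v : nat -> pt d) (i : pt d -> nat) (x : pt d) : pt d :=
  vadd x (v (i x)).

Definition fate {d} (v : nat -> pt d) (i : pt d -> nat) (x : pt d) : nat -> nat :=
  fun n => i (Nat.iter n (pt_map v i) x).

Definition eventually_periodic (w : nat -> nat) : Prop :=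
  exists n p, (1 <= p)%nat /\ forall k, w (n + p + k)%nat = w (n + k)%nat.

From Pilot Require Import Defs.
From Stdlib Require Import Reals.
Open Scope R_scope.
From Stdlib Require Import Lra Lia List ZArith Classical FunctionalExtensionality
  ClassicalEpsilon FinFun Cantor.
Import ListNotations.

(* Let [K] be the set of points whose first [N] points along the itinerary [w] lie in
   the interiors of the prescribed pieces. The fibre of [w] is contained in [K] together
   with [N] translates of piece boundaries, which are null. On [K] the first [N] iterates
   are the translations by the partial sums [T n] of the [v (w k)]; if [K + T j] and
   [K + T l] met for some [j < l], the two orbits would run together and force
   [w (j + k) = w (l + k)] up to time [N]. As [w] is not eventually periodic, for every [J]
   some [N] makes the translates [K + T j], [j < J], pairwise disjoint, and they all lie in
   the bounded region [Omega]: so [K] has measure [O(1/J)]. This last estimate is proved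
   by covering the open set [K] with its maximal dyadic cubes and counting the points of
   a fine lattice in the disjoint translates of these cubes. *)

(** * Box covers and null sets *)

Lemma prod_fin_ext d (f g : Fin.t d -> R) :
  (forall k, f k = g k) -> prod_fin d f = prod_fin d g.
Proof.
  revert f g; induction d as [|d IH]; intros f g Hfg; simpl; [easy|].
  rewrite Hfg; f_equal; apply IH; intros; apply Hfg.
Qed.

Lemma prod_fin_const d c : prod_fin d (fun _ => c) = c ^ d.
Proof. induction d as [|d IH]; simpl; [easy|]. now rewrite IH. Qed.

Lemma prod_fin_nonneg d (f : Fin.t d -> R) : (forall k, 0 <= f k) -> 0 <= prod_fin d f.
Proof.
  revert f; induction d as [|d IH]; intros f Hf; simpl; [lra|].
  apply Rmult_le_pos; auto.
Qed.

Lemma box_vol_nonneg {d} (a b : pt d) : (forall k, a k <= b k) -> 0 <= box_vol a b.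
Proof. intros Hab. apply prod_fin_nonneg. intros k; specialize (Hab k); lra. Qed.

Lemma sum_f_R0_le_mono (f : nat -> R) N M :
  (forall n, 0 <= f n) -> (N <= M)%nat -> sum_f_R0 f N <= sum_f_R0 f M.
Proof.
  intros Hf HNM. induction HNM as [|M _ IH]; simpl; [lra|].
  specialize (Hf (S M)). lra.
Qed.

Lemma outer_le_subset {d} (A B : pt d -> Prop) e1 e2 :
  (forall x, A x -> B x) -> e2 <= e1 -> outer_le B e2 -> outer_le A e1.
Proof.
  intros HAB He (a & b & Hab & Hcov & Hsum). exists a, b.
  split; [|split]; auto. intros N. specialize (Hsum N). lra.
Qed.

(* The two covers are interleaved along the even and the odd indices. *)
Lemma outer_le_union {d} (A B : pt d -> Prop) e1 e2 :
  outer_le A e1 -> outer_le B e2 -> outer_le (fun x => A x \/ B x) (e1 + e2).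
Proof.
  intros (a & b & Hab & HA & HsA) (a' & b' & Hab' & HB & HsB).
  set (mix := fun (s s' : nat -> pt d) n => if Nat.even n then s (Nat.div2 n) else s' (Nat.div2 n)).
  assert (Heven : forall s s' n, mix s s' (2 * n)%nat = s n).
  { intros; unfold mix. now rewrite Nat.even_mul, Nat.div2_double. }
  assert (Hodd : forall s s' n, mix s s' (S (2 * n)) = s' n).
  { intros; unfold mix. now rewrite Nat.even_succ, Nat.odd_mul, Nat.div2_succ_double. }
  exists (mix a a'), (mix b b'). split; [|split].
  - intros n k. unfold mix. destruct (Nat.even n); auto.
  - intros x [Hx|Hx].
    + destruct (HA x Hx) as [n Hn]. exists (2 * n)%nat. now rewrite !Heven.
    + destruct (HB x Hx) as [n Hn]. exists (S (2 * n)). now rewrite !Hodd.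
  - set (c := fun n => box_vol (mix a a' n) (mix b b' n)).
    assert (Hc : forall n, 0 <= c n).
    { intros n; unfold c, mix; destruct (Nat.even n); apply box_vol_nonneg; auto. }
    assert (Hpair : forall N, sum_f_R0 c (S (2 * N)) =
      sum_f_R0 (fun n => box_vol (a n) (b n)) N + sum_f_R0 (fun n => box_vol (a' n) (b' n)) N).
    { induction N as [|N IH].
      - simpl; unfold c; rewrite (Heven _ _ 0%nat), (Heven _ _ 0%nat),
          (Hodd _ _ 0%nat), (Hodd _ _ 0%nat); ring.
      - replace (S (2 * S N)) with (S (S (S (2 * N)))) by lia.
        rewrite (tech5 c (S (S (2 * N)))), (tech5 c (S (2 * N))), IH, !tech5. unfold c.
        replace (S (S (2 * N))) with (2 * S N)%nat by lia.
        rewrite !Heven, !Hodd. ring. }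
    intros N. apply Rle_trans with (sum_f_R0 c (S (2 * N))).
    + apply sum_f_R0_le_mono; auto; lia.
    + rewrite Hpair. specialize (HsA N). specialize (HsB N). lra.
Qed.

Lemma outer_le_translate {d} (A : pt d -> Prop) (t : pt d) e :
  outer_le A e -> outer_le (fun x => A (vadd x t)) e.
Proof.
  intros (a & b & Hab & Hcov & Hsum).
  exists (fun n k => a n k - t k), (fun n k => b n k - t k). split; [|split].
  - intros n k. specialize (Hab n k). lra.
  - intros x Hx. destruct (Hcov _ Hx) as [n Hn]. exists n. intros k.
    specialize (Hn k). unfold vadd in Hn. lra.
  - intros N. eapply Rle_trans; [|apply (Hsum N)]. right. apply sum_eq. intros n _.
    apply prod_fin_ext. intros; ring.
Qed.

(* In dimension 0 every box has volume 1 (an empty product), so the empty set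
   needs positive dimension to be small. *)
Lemma outer_le_empty d e : 0 < e -> outer_le (fun _ : pt (S d) => False) e.
Proof.
  intros He. exists (fun _ _ => 0), (fun _ _ => 0). split; [|split].
  - intros; lra.
  - intros x [].
  - intros N. rewrite (sum_eq _ (fun _ => 0)).
    + clear -He. induction N; simpl; lra.
    + intros n _. unfold box_vol. simpl. ring.
Qed.

Lemma not_leb_null_dim0 (A : pt 0 -> Prop) : ~ leb_null A.
Proof.
  intros HA. destruct (HA (/ 2) ltac:(lra)) as (a & b & _ & _ & Hsum).
  specialize (Hsum 0%nat). simpl in Hsum. unfold box_vol in Hsum. simpl in Hsum. lra.
Qed.

Lemma leb_null_finite_union d N (A : nat -> pt (S d) -> Prop) :
  (forall n, (n < N)%nat -> leb_null (A n)) ->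
  leb_null (fun x => exists n, (n < N)%nat /\ A n x).
Proof.
  induction N as [|N IH]; intros HA e He.
  - eapply outer_le_subset; [| apply Rle_refl | apply outer_le_empty; exact He].
    intros x (n & Hn & _); lia.
  - apply (outer_le_subset _ (fun x => (exists n, (n < N)%nat /\ A n x) \/ A N x)
      e (e / 2 + e / 2)); [| lra | apply outer_le_union].
    + intros x (n & Hn & Hx). destruct (Nat.eq_dec n N) as [->|Hne]; [now right|].
      left; exists n; split; [lia | easy].
    + apply IH; [intros n Hn; apply HA; lia | lra].
    + apply HA; [lia | lra].
Qed.

Lemma leb_null_translate {d} (A : pt d -> Prop) (t : pt d) :
  leb_null A -> leb_null (fun x => A (vadd x t)).
Proof. intros HA e He. apply outer_le_translate, HA, He. Qed.

(** * Topology of R^d *)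

Lemma interior_incl {d} (A : pt d -> Prop) x : Defs.interior A x -> A x.
Proof. intros (r & Hr & Hball). apply Hball. intros k. rewrite Rminus_diag, Rabs_R0. exact Hr. Qed.

Lemma boundary_of_not_interior {d} (A : pt d -> Prop) x : A x -> ~ Defs.interior A x -> boundary A x.
Proof.
  intros Hx Hint. split; [|exact Hint]. intros r Hr. exists x. split; [|exact Hx].
  intros k. rewrite Rminus_diag, Rabs_R0. exact Hr.
Qed.

Lemma region_bounded {d} (A : pt d -> Prop) : region A ->
  exists M, 0 <= M /\ forall x, A x -> forall k, Rabs (x k) <= M.
Proof.
  intros [[_ [M HM]] _]. exists (Rabs M). split; [apply Rabs_pos|].
  intros x Hx k. eapply Rle_trans; [apply HM; auto | apply RRle_abs].
Qed.

Lemma is_open_interior_translate {d} (A : pt d -> Prop) (t : pt d) :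
  is_open (fun x => Defs.interior A (vadd x t)).
Proof.
  intros x (r & Hr & Hball). exists (r / 2). split; [lra|].
  intros y Hy. exists (r / 2). split; [lra|]. intros z Hz. apply Hball. intros k.
  specialize (Hy k). specialize (Hz k). unfold vadd in *.
  replace (z k - (x k + t k)) with ((z k - (y k + t k)) + (y k - x k)) by ring.
  eapply Rle_lt_trans; [apply Rabs_triang | lra].
Qed.

Lemma is_open_finite_inter {d} (A : nat -> pt d -> Prop) N :
  (forall n, (n < N)%nat -> is_open (A n)) -> is_open (fun x => forall n, (n < N)%nat -> A n x).
Proof.
  induction N as [|N IH]; intros HA x Hx.
  - exists 1. split; [lra|]. intros y _ n Hn; lia.
  - destruct (IH (fun n Hn => HA n (Nat.lt_lt_succ_r _ _ Hn)) x) as (r1 & Hr1 & H1).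
    { intros n Hn; apply Hx; lia. }
    destruct (HA N (Nat.lt_succ_diag_r N) x (Hx N (Nat.lt_succ_diag_r N))) as (r2 & Hr2 & H2).
    exists (Rmin r1 r2). split; [now apply Rmin_glb_lt|].
    intros y Hy n Hn. assert (Hy1 : ball x r1 y).
    { intros k. specialize (Hy k). pose proof (Rmin_l r1 r2). lra. }
    destruct (Nat.eq_dec n N) as [->|Hne].
    + apply H2. intros k. specialize (Hy k). pose proof (Rmin_r r1 r2). lra.
    + apply H1; [exact Hy1 | lia].
Qed.

(** * Integer grids *)

Definition fcons {n} (c : Z) (f : Fin.t n -> Z) : Fin.t (S n) -> Z :=
  fun k => Fin.caseS' k (fun _ => Z) c f.

Lemma fcons_eta {n} (y : Fin.t (S n) -> Z) : y = fcons (y Fin.F1) (fun k => y (Fin.FS k)).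
Proof.
  apply functional_extensionality. intros k. unfold fcons.
  pattern k. apply Fin.caseS'; reflexivity.
Qed.

Lemma fcons_inj {n} c c' (f f' : Fin.t n -> Z) : fcons c f = fcons c' f' -> c = c' /\ f = f'.
Proof.
  intros H. split.
  - exact (f_equal (fun g => g Fin.F1) H).
  - apply functional_extensionality. intros k. exact (f_equal (fun g => g (Fin.FS k)) H).
Qed.

Fixpoint grid (d : nat) : (Fin.t d -> Z) -> nat -> list (Fin.t d -> Z) :=
  match d with
  | O => fun _ _ => [fun _ => 0%Z]
  | S n => fun lo c => flat_map (fun i => map (fcons (lo Fin.F1 + Z.of_nat i)%Z)
                                          (grid n (fun k => lo (Fin.FS k)) c)) (seq 0 c)
  end.

Lemma In_grid d lo c y :
  In y (grid d lo c) <-> forall k, (lo k <= y k < lo k + Z.of_nat c)%Z.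
Proof.
  revert lo y; induction d as [|d IH]; intros lo y; split.
  - intros _ k. apply Fin.case0. exact k.
  - intros _. left. apply functional_extensionality. intros k. apply Fin.case0. exact k.
  - simpl. intros Hy. apply in_flat_map in Hy. destruct Hy as (i & Hi & Hy).
    apply in_map_iff in Hy. destruct Hy as (y' & <- & Hy'). apply in_seq in Hi.
    intros k; pattern k; apply Fin.caseS'.
    + unfold fcons. simpl. lia.
    + intros p. exact (proj1 (IH _ _) Hy' p).
  - intros Hy. simpl. apply in_flat_map. exists (Z.to_nat (y Fin.F1 - lo Fin.F1)). split.
    + apply in_seq. specialize (Hy Fin.F1). lia.
    + apply in_map_iff. exists (fun k => y (Fin.FS k)). split.
      * symmetry. rewrite (fcons_eta y) at 1. f_equal. specialize (Hy Fin.F1). lia.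
      * apply IH. intros k. apply (Hy (Fin.FS k)).
Qed.

Lemma grid_length d lo c : length (grid d lo c) = (c ^ d)%nat.
Proof.
  revert lo; induction d as [|d IH]; intros lo; simpl; [easy|].
  rewrite (flat_map_constant_length (c := (c ^ d)%nat)).
  - rewrite length_seq. lia.
  - intros i _. rewrite length_map. apply IH.
Qed.

Lemma NoDup_flat_map {A B} (f : A -> list B) l :
  NoDup l -> (forall x, In x l -> NoDup (f x)) ->
  (forall x y e, In x l -> In y l -> x <> y -> In e (f x) -> In e (f y) -> False) ->
  NoDup (flat_map f l).
Proof.
  induction l as [|a l IH]; intros Hl Hf Hd; simpl; [constructor|].
  inversion Hl; subst. apply NoDup_app.
  - apply Hf; simpl; auto.
  - apply IH; auto.
    + intros; apply Hf; simpl; auto.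
    + intros x y e Hx Hy; apply Hd; simpl; auto.
  - intros e He1 He2. apply in_flat_map in He2. destruct He2 as (y & Hy & He2).
    apply (Hd a y e); simpl; auto. intros ->; auto.
Qed.

Lemma grid_NoDup d lo c : NoDup (grid d lo c).
Proof.
  revert lo; induction d as [|d IH]; intros lo; simpl.
  - repeat constructor; auto.
  - apply NoDup_flat_map.
    + apply seq_NoDup.
    + intros x _. apply Injective_map_NoDup; [|apply IH].
      intros f f' H. now apply fcons_inj in H.
    + intros x y e _ _ Hxy Hx Hy.
      apply in_map_iff in Hx. destruct Hx as (f & <- & _).
      apply in_map_iff in Hy. destruct Hy as (f' & Hf' & _).
      apply fcons_inj in Hf'. lia.
Qed.

(** * Dyadic cubes *)

Lemma Int_part_spec r : IZR (Int_part r) <= r < IZR (Int_part r) + 1.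
Proof. destruct (base_Int_part r). lra. Qed.

Lemma Int_part_unique z r : IZR z <= r < IZR z + 1 -> Int_part r = z.
Proof.
  intros Hz. unfold Int_part.
  assert (z + 1 = up r)%Z by (apply tech_up; rewrite plus_IZR; lra).
  lia.
Qed.

Lemma Int_part_ge z r : IZR z <= r -> (z <= Int_part r)%Z.
Proof.
  intros Hz. destruct (Int_part_spec r) as [_ Hr].
  assert (Hlt : IZR z < IZR (Int_part r + 1)) by (rewrite plus_IZR; lra).
  apply lt_IZR in Hlt. lia.
Qed.

Lemma Rabs_le_inv a b : Rabs a <= b -> - b <= a <= b.
Proof. unfold Rabs; destruct Rcase_abs; lra. Qed.

Lemma pow2_pos q : 0 < 2 ^ q.
Proof. apply pow_lt; lra. Qed.

Lemma IZR_pow2 e : IZR (2 ^ Z.of_nat e) = 2 ^ e.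
Proof.
  induction e as [|e IH]; [reflexivity|].
  rewrite Nat2Z.inj_succ, Z.pow_succ_r, mult_IZR, IH by lia. simpl. ring.
Qed.

Lemma exists_inv_pow2_lt r : 0 < r -> exists q, / 2 ^ q < r.
Proof.
  intros Hr. destruct (archimed (/ r)) as [Hup _].
  assert (Hr' : 0 < / r) by (apply Rinv_0_lt_compat; auto).
  set (q := Z.to_nat (up (/ r))).
  assert (Hq : / r < 2 ^ q).
  { assert (Hpow : INR q <= 2 ^ q).
    { clear. induction q as [|q IH]; [simpl; lra|].
      rewrite S_INR. simpl. assert (1 <= 2 ^ q) by (apply pow_R1_Rle; lra). lra. }
    unfold q in *. rewrite INR_IZR_INZ, Z2Nat.id in Hpow; [lra|].
    apply le_IZR. lra. }
  exists q. rewrite <- (Rinv_inv r). apply Rinv_lt_contravar; auto.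
  apply Rmult_lt_0_compat; auto. apply pow2_pos.
Qed.

Lemma exists_nat_div_le C e : 0 < e -> exists J, (0 < J)%nat /\ C / INR J <= e.
Proof.
  intros He. destruct (archimed (C / e)) as [Hup _].
  exists (S (Z.to_nat (up (C / e)))). split; [lia|].
  assert (HJ : C / e < INR (S (Z.to_nat (up (C / e))))).
  { assert (Hz : (up (C / e) <= Z.of_nat (Z.to_nat (up (C / e))))%Z) by lia.
    apply IZR_le in Hz. rewrite S_INR, INR_IZR_INZ. lra. }
  set (J := INR _) in *. assert (0 < J) by (apply lt_0_INR; lia).
  apply Rmult_le_reg_r with J; auto. unfold Rdiv at 1. rewrite Rmult_assoc, Rinv_l by lra.
  apply Rmult_lt_compat_r with (r := e) in HJ; auto.
  replace (C / e * e) with C in HJ by (field; lra). lra.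
Qed.

Section DyadicCells.
Context {d : nat}.

Definition dyadic_cell q (z : Fin.t d -> Z) (x : pt d) : Prop :=
  forall k, IZR (z k) <= x k * 2 ^ q <= IZR (z k) + 1.
Definition dyadic_cell_open q (z : Fin.t d -> Z) (x : pt d) : Prop :=
  forall k, IZR (z k) < x k * 2 ^ q < IZR (z k) + 1.
Definition dyadic_index q (x : pt d) : Fin.t d -> Z := fun k => Int_part (x k * 2 ^ q).

Lemma dyadic_cell_index q x : dyadic_cell q (dyadic_index q x) x.
Proof. intros k. destruct (Int_part_spec (x k * 2 ^ q)). unfold dyadic_index. lra. Qed.

Lemma dyadic_cell_open_index q z x : dyadic_cell_open q z x -> z = dyadic_index q x.
Proof.
  intros Hx. apply functional_extensionality. intros k. symmetry.
  apply Int_part_unique. specialize (Hx k). lra.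
Qed.

Lemma dyadic_cell_in_box q z x : dyadic_cell q z x ->
  in_box (fun k => IZR (z k) / 2 ^ q) (fun k => (IZR (z k) + 1) / 2 ^ q) x.
Proof.
  intros Hx k. specialize (Hx k). pose proof (pow2_pos q).
  split; apply Rmult_le_reg_r with (2 ^ q); auto; unfold Rdiv;
    rewrite Rmult_assoc, Rinv_l; lra.
Qed.

Lemma dyadic_cell_dist q x u k :
  dyadic_cell q (dyadic_index q x) u -> Rabs (u k - x k) <= / 2 ^ q.
Proof.
  intros Hu. specialize (Hu k). destruct (dyadic_cell_index q x k).
  pose proof (pow2_pos q).
  apply Rmult_le_reg_r with (2 ^ q); auto. rewrite Rinv_l by lra.
  rewrite <- (Rabs_right (2 ^ q)) at 1 by lra. rewrite <- Rabs_mult.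
  apply Rabs_le. lra.
Qed.

Lemma dyadic_cell_nest p q x u : (p <= q)%nat ->
  dyadic_cell q (dyadic_index q x) u -> dyadic_cell p (dyadic_index p x) u.
Proof.
  intros Hpq Hu k. specialize (Hu k). unfold dyadic_index in *.
  set (e := (q - p)%nat).
  assert (Hq : 2 ^ q = 2 ^ p * 2 ^ e) by (unfold e; rewrite <- pow_add; f_equal; lia).
  set (A := Int_part (x k * 2 ^ p)) in *. set (B := Int_part (x k * 2 ^ q)) in *.
  destruct (Int_part_spec (x k * 2 ^ p)) as [HA1 HA2]. fold A in HA1, HA2.
  destruct (Int_part_spec (x k * 2 ^ q)) as [HB1 HB2]. fold B in HB1, HB2.
  pose proof (pow2_pos p). pose proof (pow2_pos e).
  assert (G1 : (A * 2 ^ Z.of_nat e <= B)%Z).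
  { apply Int_part_ge. rewrite mult_IZR, IZR_pow2, Hq. nra. }
  assert (G2 : (B < (A + 1) * 2 ^ Z.of_nat e)%Z).
  { apply lt_IZR. rewrite mult_IZR, IZR_pow2, plus_IZR. rewrite Hq in HB1. nra. }
  assert (G3 : (B + 1 <= (A + 1) * 2 ^ Z.of_nat e)%Z) by lia.
  apply IZR_le in G1, G3.
  rewrite mult_IZR, IZR_pow2 in G1. rewrite plus_IZR, mult_IZR, IZR_pow2, plus_IZR in G3.
  rewrite Hq in Hu. split; apply Rmult_le_reg_r with (2 ^ e); auto; nra.
Qed.

(* [x] itself gives the lower bound, the upper corner of its level-[q] cube the strict
   upper bound. *)
Lemma dyadic_index_of_sub p q x w :
  (forall u, dyadic_cell q (dyadic_index q x) u -> dyadic_cell p w u) -> w = dyadic_index p x.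
Proof.
  intros Hsub. apply functional_extensionality. intros k. symmetry.
  apply Int_part_unique.
  set (z := dyadic_index q x).
  set (corner := fun j => (IZR (z j) + 1) / 2 ^ q).
  pose proof (pow2_pos p). pose proof (pow2_pos q).
  assert (Hcorner : dyadic_cell q z corner).
  { intros j. replace (corner j * 2 ^ q) with (IZR (z j) + 1) by (unfold corner; field; lra).
    lra. }
  assert (Hxc : x k < corner k).
  { destruct (dyadic_cell_index q x k) as [_ Hx].
    destruct (Int_part_spec (x k * 2 ^ q)) as [_ Hlt]. unfold corner, z, dyadic_index.
    apply Rmult_lt_reg_r with (2 ^ q); auto.
    replace ((IZR (Int_part (x k * 2 ^ q)) + 1) / 2 ^ q * 2 ^ q)
      with (IZR (Int_part (x k * 2 ^ q)) + 1) by (field; lra). lra. }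
  destruct (Hsub x (dyadic_cell_index q x) k) as [Hlo _].
  destruct (Hsub corner Hcorner k) as [_ Hhi].
  split; [lra|]. apply Rlt_le_trans with (corner k * 2 ^ p); [|lra].
  apply Rmult_lt_compat_r; auto.
Qed.

End DyadicCells.

(** * Covering an open set by maximal dyadic cubes *)

Lemma ex_minimal (Q : nat -> Prop) :
  (exists n, Q n) -> exists n, Q n /\ forall m, (m < n)%nat -> ~ Q m.
Proof.
  intros [n Hn]. induction n as [n IH] using (well_founded_induction lt_wf).
  destruct (classic (exists m, (m < n)%nat /\ Q m)) as [(m & Hm & HQm)|Hno].
  - exact (IH m Hm HQm).
  - exists n. split; auto. intros m Hm HQm. apply Hno; eauto.
Qed.

Section DyadicCover.
Context {d : nat} (K : pt d -> Prop) (M : R).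

Definition maximal_cell q (z : Fin.t d -> Z) : Prop :=
  (forall u, dyadic_cell q z u -> K u) /\
  forall p w, (p < q)%nat -> (forall u, dyadic_cell q z u -> dyadic_cell p w u) ->
    ~ (forall u, dyadic_cell p w u -> K u).

Lemma maximal_cells_disjoint q z q' z' y :
  maximal_cell q z -> maximal_cell q' z' -> (q, z) <> (q', z') ->
  dyadic_cell_open q z y -> dyadic_cell_open q' z' y -> False.
Proof.
  intros [Hq Hmax] [Hq' Hmax'] Hne Hy Hy'.
  apply dyadic_cell_open_index in Hy, Hy'. subst z z'.
  destruct (Nat.lt_total q q') as [Hlt|[->|Hlt]].
  - apply (Hmax' q (dyadic_index q y) Hlt); auto. intros u. apply dyadic_cell_nest; lia.
  - now apply Hne.
  - apply (Hmax q' (dyadic_index q' y) Hlt); auto. intros u. apply dyadic_cell_nest; lia.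
Qed.

(* A list containing every level-[q] cube that meets the box [[-M, M]^d]. *)
Definition cells_within q : list (Fin.t d -> Z) :=
  let r := (up (M * 2 ^ q) + 1)%Z in grid d (fun _ => (- r)%Z) (Z.to_nat (2 * r + 1)).

Lemma dyadic_index_within q x : (forall k, Rabs (x k) <= M) ->
  In (dyadic_index q x) (cells_within q).
Proof.
  intros Hx. apply In_grid. intros k. unfold dyadic_index.
  destruct (Rabs_le_inv _ _ (Hx k)). pose proof (pow2_pos q).
  destruct (Int_part_spec (x k * 2 ^ q)). destruct (archimed (M * 2 ^ q)).
  assert (0 <= up (M * 2 ^ q))%Z by (apply le_IZR; simpl; nra).
  assert (Int_part (x k * 2 ^ q) < up (M * 2 ^ q))%Z by (apply lt_IZR; nra).
  assert (- up (M * 2 ^ q) - 1 < Int_part (x k * 2 ^ q))%Z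
    by (apply lt_IZR; rewrite minus_IZR, opp_IZR; nra).
  rewrite Z2Nat.id; lia.
Qed.

(* [n] encodes a level [q] and a position in [cells_within q] via the Cantor pairing. *)
Definition cell_level n := fst (Cantor.of_nat n).
Definition cell_of n := nth (snd (Cantor.of_nat n)) (cells_within (cell_level n)) (fun _ => 0%Z).
Definition selected n : Prop :=
  (snd (Cantor.of_nat n) < length (cells_within (cell_level n)))%nat /\
  maximal_cell (cell_level n) (cell_of n).

Lemma cell_level_le n : (cell_level n <= n)%nat.
Proof.
  pose proof (to_nat_non_decreasing (fst (Cantor.of_nat n)) (snd (Cantor.of_nat n))) as Hle.
  rewrite <- surjective_pairing, cancel_to_of in Hle. unfold cell_level. lia.
Qed.

Lemma selected_inj n n' : selected n -> selected n' ->
  cell_level n = cell_level n' -> cell_of n = cell_of n' -> n = n'.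
Proof.
  intros [Hn _] [Hn' _] Hq Hz. unfold cell_of in Hz. rewrite Hq in Hn, Hz.
  apply NoDup_nth in Hz; [| apply grid_NoDup | exact Hn | exact Hn'].
  rewrite <- (cancel_to_of n), <- (cancel_to_of n'). f_equal.
  rewrite (surjective_pairing (Cantor.of_nat n)), (surjective_pairing (Cantor.of_nat n')).
  unfold cell_level in Hq. now rewrite Hq, Hz.
Qed.

(* Unselected indices get the degenerate box at the origin. *)
Definition cover_lo n : pt d :=
  if excluded_middle_informative (selected n)
  then fun k => IZR (cell_of n k) / 2 ^ cell_level n else fun _ => 0.
Definition cover_hi n : pt d :=
  if excluded_middle_informative (selected n)
  then fun k => (IZR (cell_of n k) + 1) / 2 ^ cell_level n else fun _ => 0.

Lemma cover_lo_le_hi n k : cover_lo n k <= cover_hi n k.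
Proof.
  unfold cover_lo, cover_hi. destruct excluded_middle_informative; [|lra].
  pose proof (pow2_pos (cell_level n)).
  apply Rmult_le_compat_r; [left; apply Rinv_0_lt_compat|]; lra.
Qed.

(* The cube of [x] at the first level where it fits in [K] is maximal. *)
Lemma dyadic_cover : is_open K -> (forall x, K x -> forall k, Rabs (x k) <= M) ->
  forall x, K x -> exists n, in_box (cover_lo n) (cover_hi n) x.
Proof.
  intros HK HKM x Hx.
  destruct (HK x Hx) as (r & Hr & Hball).
  destruct (exists_inv_pow2_lt r Hr) as [q0 Hq0].
  destruct (ex_minimal (fun q => forall u, dyadic_cell q (dyadic_index q x) u -> K u))
    as (q & Hq & Hmin).
  { exists q0. intros u Hu. apply Hball. intros k.
    pose proof (dyadic_cell_dist q0 x u k Hu). lra. }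
  assert (Hmax : maximal_cell q (dyadic_index q x)).
  { split; auto. intros p w Hpq Hsub HKw.
    apply dyadic_index_of_sub in Hsub. subst w. exact (Hmin p Hpq HKw). }
  destruct (In_nth _ _ (fun _ => 0%Z) (dyadic_index_within q x (HKM x Hx))) as (p & Hp & Hnth).
  exists (Cantor.to_nat (q, p)).
  assert (Hlev : cell_level (Cantor.to_nat (q, p)) = q) by (unfold cell_level; now rewrite cancel_of_to).
  assert (Hcell : cell_of (Cantor.to_nat (q, p)) = dyadic_index q x).
  { unfold cell_of. rewrite Hlev, cancel_of_to. exact Hnth. }
  unfold cover_lo, cover_hi. destruct excluded_middle_informative as [_|Hns].
  - rewrite Hlev, Hcell. apply dyadic_cell_in_box, dyadic_cell_index.
  - exfalso. apply Hns. unfold selected. rewrite Hlev, Hcell, cancel_of_to. auto.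
Qed.

End DyadicCover.

(** * Disjoint translates of an open set *)

(* The integer points [y] of a grid of side [2^-L] such that [y / 2^L - t] lies in the
   open level-[q] cube [z]: a lattice box of side [2^(L-q) - 2]. *)
Definition lattice_block {d} L q (z : Fin.t d -> Z) (t : pt d) : list (Fin.t d -> Z) :=
  grid d (fun k => up ((IZR (z k) / 2 ^ q + t k) * 2 ^ L)) (2 ^ (L - q) - 2).

Definition lattice_shift {d} L (y : Fin.t d -> Z) (t : pt d) : pt d :=
  fun k => IZR (y k) / 2 ^ L - t k.

Lemma lattice_block_open_cell {d} L q z t (y : Fin.t d -> Z) : (q < L)%nat ->
  In y (lattice_block L q z t) -> dyadic_cell_open q z (lattice_shift L y t).
Proof.
  intros HqL Hy k. destruct (proj1 (In_grid _ _ _ _) Hy k) as [Hlo Hhi].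
  set (e := (L - q)%nat) in *.
  assert (HL : 2 ^ L = 2 ^ q * 2 ^ e) by (rewrite <- pow_add; f_equal; lia).
  assert (He : (2 <= 2 ^ e)%nat).
  { replace 2%nat with (2 ^ 1)%nat at 1 by reflexivity. apply Nat.pow_le_mono_r; lia. }
  assert (Hsize : IZR (Z.of_nat (2 ^ e - 2)) = 2 ^ e - 2).
  { rewrite <- INR_IZR_INZ, minus_INR, pow_INR by exact He.
    replace (INR 2) with 2 by (simpl; lra). reflexivity. }
  set (s := (IZR (z k) / 2 ^ q + t k) * 2 ^ L) in *.
  destruct (archimed s) as [Hs1 Hs2].
  apply IZR_le in Hlo. assert (Hhi' : (y k <= up s + Z.of_nat (2 ^ e - 2) - 1)%Z) by lia.
  apply IZR_le in Hhi'. rewrite minus_IZR, plus_IZR, Hsize in Hhi'.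
  pose proof (pow2_pos q). pose proof (pow2_pos e).
  unfold lattice_shift.
  replace ((IZR (y k) / 2 ^ L - t k) * 2 ^ q) with (IZR (z k) + (IZR (y k) - s) / 2 ^ e)
    by (unfold s; rewrite HL; field; lra).
  assert (0 < (IZR (y k) - s) / 2 ^ e) by (apply Rdiv_lt_0_compat; lra).
  assert ((IZR (y k) - s) / 2 ^ e < 1) by (apply Rmult_lt_reg_r with (2 ^ e); auto;
    unfold Rdiv; rewrite Rmult_assoc, Rinv_l; lra).
  lra.
Qed.

(* A fine lattice block holds at least half the side of the cube, measured in [2^-L]. *)
Lemma lattice_block_side q L : (q + 2 <= L)%nat -> / 2 ^ q * 2 ^ (L - 1) <= INR (2 ^ (L - q) - 2).
Proof.
  intros HqL. set (e := (L - q - 1)%nat).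
  assert (Hq : 2 ^ (L - 1) = 2 ^ q * 2 ^ e) by (rewrite <- pow_add; f_equal; lia).
  assert (He : 2 <= 2 ^ e).
  { replace 2 with (2 ^ 1) at 1 by ring. apply Rle_pow; [lra | lia]. }
  pose proof (pow2_pos q).
  replace (L - q)%nat with (S e) by lia.
  rewrite minus_INR, pow_INR by (apply (Nat.pow_le_mono_r 2 1); lia).
  replace (INR 2) with 2 by (simpl; lra).
  rewrite Hq, <- Rmult_assoc, Rinv_l by lra. simpl. lra.
Qed.

Lemma lattice_within {d} M L (y : Fin.t d -> Z) :
  (forall k, Rabs (IZR (y k) / 2 ^ L) <= M) -> In y (cells_within M L).
Proof.
  intros Hy. replace y with (dyadic_index L (fun k => IZR (y k) / 2 ^ L)).
  - now apply dyadic_index_within.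
  - apply functional_extensionality. intros k. apply Int_part_unique.
    pose proof (pow2_pos L). replace (IZR (y k) / 2 ^ L * 2 ^ L) with (IZR (y k)) by (field; lra).
    lra.
Qed.

Lemma cells_within_length {d} M L : 0 <= M -> (0 < L)%nat ->
  INR (length (@cells_within d M L)) <= (2 ^ (L - 1) * (4 * M + 5)) ^ d.
Proof.
  intros HM HL. unfold cells_within. rewrite grid_length, pow_INR.
  set (r := (up (M * 2 ^ L) + 1)%Z).
  pose proof (pow2_pos L). destruct (archimed (M * 2 ^ L)).
  assert (Hr : 0 <= IZR r <= M * 2 ^ L + 2) by (unfold r; rewrite plus_IZR; nra).
  assert (0 <= r)%Z by (apply le_IZR; lra).
  rewrite INR_IZR_INZ, Z2Nat.id, plus_IZR, mult_IZR by lia.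
  apply pow_incr. split; [lra|].
  assert (Hhalf : 2 ^ L = 2 * 2 ^ (L - 1)).
  { destruct L as [|L]; [lia|]. simpl. now rewrite Nat.sub_0_r. }
  assert (1 <= 2 ^ (L - 1)) by (apply pow_R1_Rle; lra).
  rewrite Hhalf in Hr. nra.
Qed.

Lemma vadd_lattice_shift {d} L (y : Fin.t d -> Z) t :
  vadd (lattice_shift L y t) t = fun k => IZR (y k) / 2 ^ L.
Proof. apply functional_extensionality. intros k. unfold vadd, lattice_shift. ring. Qed.

Section DisjointTranslates.
Context (d : nat) (K : pt (S d) -> Prop) (M : R) (T : nat -> pt (S d)) (J : nat).
Hypothesis HM : 0 <= M.
Hypothesis HTM : forall j x, (j < J)%nat -> K x -> forall k, Rabs (vadd x (T j) k) <= M.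
Hypothesis Hdisj : forall j l x y, (j < J)%nat -> (l < J)%nat -> j <> l -> K x -> K y ->
  vadd x (T j) = vadd y (T l) -> False.

Definition lattice_points L n : list (Fin.t (S d) -> Z) :=
  if excluded_middle_informative (selected K M n)
  then flat_map (fun j => lattice_block L (cell_level n) (cell_of M n) (T j)) (seq 0 J)
  else [].

Lemma In_lattice_points L n y : In y (lattice_points L n) ->
  selected K M n /\ exists j, (j < J)%nat /\
    In y (lattice_block L (cell_level n) (cell_of M n) (T j)).
Proof.
  unfold lattice_points. destruct excluded_middle_informative as [Hn|]; [|intros []].
  intros Hy. apply in_flat_map in Hy. destruct Hy as (j & Hj & Hy). apply in_seq in Hj.
  split; [exact Hn|]. exists j. split; [lia | exact Hy].
Qed.

Section Level.
Variable N : nat.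
Let L := (N + 2)%nat.

Lemma level_bound n : (n <= N)%nat -> (cell_level n + 2 <= L)%nat.
Proof. intros Hn. pose proof (cell_level_le n). unfold L. lia. Qed.

Lemma lattice_block_in_K n j y : (n <= N)%nat -> selected K M n ->
  In y (lattice_block L (cell_level n) (cell_of M n) (T j)) ->
  dyadic_cell_open (cell_level n) (cell_of M n) (lattice_shift L y (T j)) /\
  K (lattice_shift L y (T j)).
Proof.
  intros Hn [_ [Hcell _]] Hy. pose proof (level_bound n Hn) as HL.
  pose proof (lattice_block_open_cell L (cell_level n) _ _ _ ltac:(lia) Hy) as Hopen.
  split; [exact Hopen|]. apply Hcell. intros k. specialize (Hopen k). lra.
Qed.

Lemma lattice_points_NoDup : NoDup (flat_map (lattice_points L) (seq 0 (S N))).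
Proof.
  assert (Hdiff : forall n n' j j' y, (n <= N)%nat -> (n' <= N)%nat -> (j < J)%nat -> (j' < J)%nat ->
    selected K M n -> selected K M n' -> (n, j) <> (n', j') ->
    In y (lattice_block L (cell_level n) (cell_of M n) (T j)) ->
    In y (lattice_block L (cell_level n') (cell_of M n') (T j')) -> False).
  { intros n n' j j' y Hn Hn' Hj Hj' Hsel Hsel' Hne Hy Hy'.
    destruct (lattice_block_in_K n j y Hn Hsel Hy) as [Ho HKy].
    destruct (lattice_block_in_K n' j' y Hn' Hsel' Hy') as [Ho' HKy'].
    destruct (Nat.eq_dec j j') as [<-|Hjj].
    - apply (maximal_cells_disjoint K _ _ _ _ (lattice_shift L y (T j)) (proj2 Hsel) (proj2 Hsel'));
        auto.
      intros Heq. injection Heq as Hq Hz. apply Hne. f_equal. now apply selected_inj with K M.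
    - apply (Hdisj j j' _ _ Hj Hj' Hjj HKy HKy'). now rewrite !vadd_lattice_shift. }
  apply NoDup_flat_map; [apply seq_NoDup | |].
  - intros n Hn. apply in_seq in Hn. unfold lattice_points. destruct excluded_middle_informative as [Hsel|]; [|constructor].
    apply NoDup_flat_map; [apply seq_NoDup | intros; apply grid_NoDup |].
    intros j j' y Hj Hj' Hjj Hy Hy'. apply in_seq in Hj, Hj'.
    apply (Hdiff n n j j' y); auto; try lia. congruence.
  - intros n n' y Hn Hn' Hnn Hy Hy'. apply in_seq in Hn, Hn'.
    apply In_lattice_points in Hy as (Hsel & j & Hj & Hy).
    apply In_lattice_points in Hy' as (Hsel' & j' & Hj' & Hy').
    apply (Hdiff n n' j j' y); auto; try lia. congruence.
Qed.

Lemma lattice_points_incl : incl (flat_map (lattice_points L) (seq 0 (S N))) (cells_within M L).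
Proof.
  intros y Hy. apply in_flat_map in Hy as (n & Hn & Hy). apply in_seq in Hn.
  apply In_lattice_points in Hy as (Hsel & j & Hj & Hy).
  destruct (lattice_block_in_K n j y ltac:(lia) Hsel Hy) as [_ HKy].
  apply lattice_within. intros k.
  pose proof (HTM j _ Hj HKy k) as Hk. now rewrite vadd_lattice_shift in Hk.
Qed.

Lemma cover_vol_le_lattice_points n : (n <= N)%nat ->
  box_vol (cover_lo K M n) (cover_hi K M n) * (INR J * (2 ^ (L - 1)) ^ S d)
  <= INR (length (lattice_points L n)).
Proof.
  intros Hn. unfold box_vol, cover_lo, cover_hi, lattice_points.
  destruct excluded_middle_informative as [Hsel|]; [|simpl; lra].
  set (q := cell_level n). pose proof (pow2_pos q).
  rewrite (prod_fin_ext _ _ (fun _ => / 2 ^ q)) by (intros k; field; lra).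
  rewrite prod_fin_const, (flat_map_constant_length (c := ((2 ^ (L - q) - 2) ^ S d)%nat))
    by (intros; apply grid_length).
  rewrite length_seq, mult_INR, pow_INR.
  replace ((/ 2 ^ q) ^ S d * (INR J * (2 ^ (L - 1)) ^ S d))
    with (INR J * (/ 2 ^ q * 2 ^ (L - 1)) ^ S d) by (rewrite Rpow_mult_distr; ring).
  apply Rmult_le_compat_l; [apply pos_INR|]. apply pow_incr. split.
  - apply Rmult_le_pos; [left; apply Rinv_0_lt_compat; lra | apply pow_le; lra].
  - apply lattice_block_side, level_bound, Hn.
Qed.

End Level.

Lemma INR_length_flat_map_seq {B} (f : nat -> list B) N :
  INR (length (flat_map f (seq 0 (S N)))) = sum_f_R0 (fun n => INR (length (f n))) N.
Proof.
  induction N as [|N IH].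
  - simpl. now rewrite length_app, Nat.add_0_r.
  - rewrite seq_S, flat_map_app, length_app, plus_INR, IH. simpl.
    now rewrite length_app, Nat.add_0_r.
Qed.

(* Counting points of the lattice [2^-L Z^d], [L = N + 2], which is fine enough to
   resolve every cube of the first [N] cover boxes: the [J] translates of these cubes
   carry disjoint sets of lattice points, all inside the box [[-M, M]^d]. *)
Lemma cover_vol_sum_le N : (0 < J)%nat ->
  sum_f_R0 (fun n => box_vol (cover_lo K M n) (cover_hi K M n)) N <= (4 * M + 5) ^ S d / INR J.
Proof.
  intros HJ. set (L := (N + 2)%nat). set (s := 2 ^ (L - 1)).
  assert (HJ' : 0 < INR J) by (apply lt_0_INR; lia).
  assert (Hs : 0 < s ^ S d) by (apply pow_lt, pow2_pos).
  assert (Hcount := NoDup_incl_length (lattice_points_NoDup N) (lattice_points_incl N)).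
  apply le_INR in Hcount. rewrite INR_length_flat_map_seq in Hcount.
  pose proof (cells_within_length (d := S d) M L HM ltac:(unfold L; lia)) as Hcells.
  apply Rmult_le_reg_r with (INR J * s ^ S d); [nra|].
  replace ((4 * M + 5) ^ S d / INR J * (INR J * s ^ S d)) with ((s * (4 * M + 5)) ^ S d)
    by (rewrite Rpow_mult_distr; field; lra).
  rewrite Rmult_comm, scal_sum. eapply Rle_trans; [|exact Hcells]. eapply Rle_trans; [|exact Hcount].
  apply sum_Rle. intros n Hn. now apply cover_vol_le_lattice_points.
Qed.

Lemma disjoint_translates_outer_le : (0 < J)%nat -> is_open K ->
  (forall x, K x -> forall k, Rabs (x k) <= M) ->
  outer_le K ((4 * M + 5) ^ S d / INR J).
Proof.
  intros HJ HK HKM. exists (cover_lo K M), (cover_hi K M). split; [|split].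
  - intros; apply cover_lo_le_hi.
  - now apply dyadic_cover.
  - intros N. now apply cover_vol_sum_le.
Qed.

End DisjointTranslates.

(** * Itineraries *)

Lemma finite_bound_choice (Q : nat -> nat -> Prop) J :
  (forall j, (j < J)%nat -> exists k, Q j k) ->
  exists B, forall j, (j < J)%nat -> exists k, (k < B)%nat /\ Q j k.
Proof.
  induction J as [|J IH]; intros HQ.
  - exists 0%nat. intros; lia.
  - destruct IH as [B HB]; [intros j Hj; apply HQ; lia|].
    destruct (HQ J ltac:(lia)) as [k Hk].
    exists (Nat.max B (S k)). intros j Hj.
    destruct (Nat.eq_dec j J) as [->|Hne].
    + exists k. split; [lia | exact Hk].
    + destruct (HB j ltac:(lia)) as (k' & Hk' & HQk'). exists k'. split; [lia | exact HQk'].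
Qed.

Lemma not_eventually_periodic_separated (w : nat -> nat) : ~ eventually_periodic w ->
  forall J, exists N, (J <= N)%nat /\ forall j l, (j < l)%nat -> (l < J)%nat ->
    exists k, (l + k < N)%nat /\ w (j + k)%nat <> w (l + k)%nat.
Proof.
  intros Hnp J. induction J as [|J (N0 & HN0 & Hsep)].
  - exists 0%nat. split; [lia|]. intros; lia.
  - destruct (finite_bound_choice (fun j k => w (j + k)%nat <> w (J + k)%nat) J) as [B HB].
    { intros j Hj. apply NNPP. intros Hall. apply Hnp. exists j, (J - j)%nat. split; [lia|].
      intros k. apply NNPP. intros Hk. apply Hall. exists k.
      now replace (J + k)%nat with (j + (J - j) + k)%nat by lia. }
    exists (Nat.max (S N0) (J + B + 1)). split; [lia|].
    intros j l Hjl Hl. destruct (Nat.eq_dec l J) as [->|Hne].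
    + destruct (HB j Hjl) as (k & Hk & Hw). exists k. split; [lia | exact Hw].
    + destruct (Hsep j l Hjl ltac:(lia)) as (k & Hk & Hw). exists k. split; [lia | exact Hw].
Qed.

Section Itinerary.
Context {d : nat} (v : nat -> pt d) (w : nat -> nat).

(* [x + orbit_shift n] is the [n]-th point of an orbit that starts at [x] and follows the
   itinerary [w]. *)
Fixpoint orbit_shift n : pt d :=
  match n with
  | O => fun _ => 0
  | S n => vadd (orbit_shift n) (v (w n))
  end.

Lemma vadd_orbit_shift_0 x : vadd x (orbit_shift 0) = x.
Proof. apply functional_extensionality. intros k. unfold vadd. simpl. ring. Qed.

Lemma vadd_orbit_shift_S x n :
  vadd x (orbit_shift (S n)) = vadd (vadd x (orbit_shift n)) (v (w n)).
Proof. apply functional_extensionality. intros k. unfold vadd. simpl. unfold vadd. ring. Qed.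

(* Two orbits that follow [w] up to time [N] and meet at times [j] and [l] continue together,
   so [w] agrees with its shift by [l - j] until time [N]. *)
Lemma orbit_shifts_meet (c : pt d -> nat) x y j l N :
  (forall n, (n < N)%nat -> c (vadd x (orbit_shift n)) = w n) ->
  (forall n, (n < N)%nat -> c (vadd y (orbit_shift n)) = w n) ->
  vadd x (orbit_shift j) = vadd y (orbit_shift l) ->
  forall k, (j + k < N)%nat -> (l + k < N)%nat -> w (j + k)%nat = w (l + k)%nat.
Proof.
  intros Hx Hy Hjl.
  assert (Hmeet : forall k, (j + k < N)%nat -> (l + k < N)%nat ->
    vadd x (orbit_shift (j + k)) = vadd y (orbit_shift (l + k))).
  { induction k as [|k IH]; intros Hjk Hlk; [now rewrite !Nat.add_0_r|].
    rewrite !Nat.add_succ_r, !vadd_orbit_shift_S, IH by lia.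
    now rewrite <- Hx, <- Hy, IH by lia. }
  intros k Hjk Hlk. now rewrite <- Hx, <- Hy, Hmeet.
Qed.

End Itinerary.

Lemma piece_interior_index {d} (Omega : pt d -> Prop) m P v i :
  piecewise_translation Omega m P v i ->
  forall k x, (k < m)%nat -> Defs.interior (P k) x -> Omega x /\ i x = k.
Proof.
  intros (_ & _ & Hcov & Hoverlap & _ & _ & Hindex & _) k x Hk Hx.
  assert (HOx : Omega x) by (apply Hcov; exists k; split; [exact Hk | now apply interior_incl]).
  split; [exact HOx|]. destruct (Hindex x HOx) as [Hix HPix].
  destruct (Nat.eq_dec (i x) k) as [|Hne]; [easy|]. exfalso.
  destruct (Hoverlap k (i x) x Hk Hix (not_eq_sym Hne) (interior_incl _ _ Hx) HPix) as [[_ Hb] _].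
  exact (Hb Hx).
Qed.

Section PiecewiseOrbit.
Context {d : nat} (Omega : pt d -> Prop) (m : nat) (P : nat -> pt d -> Prop)
  (v : nat -> pt d) (i : pt d -> nat) (w : nat -> nat).
Hypothesis Hindex : forall x, Omega x -> (i x < m)%nat /\ P (i x) x.
Hypothesis Hmap : forall k x, (k < m)%nat -> P k x -> Omega (vadd x (v k)).

Lemma fate_orbit x : Omega x -> fate v i x = w -> forall n,
  Nat.iter n (pt_map v i) x = vadd x (orbit_shift v w n) /\ Omega (vadd x (orbit_shift v w n)).
Proof.
  intros Hx Hfate n. induction n as [|n [Hiter HOn]].
  - rewrite vadd_orbit_shift_0. now split.
  - assert (Hin : i (vadd x (orbit_shift v w n)) = w n).
    { assert (Hn : fate v i x n = w n) by now rewrite Hfate.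
      unfold fate in Hn. now rewrite Hiter in Hn. }
    destruct (Hindex _ HOn) as [Him HP].
    change (Nat.iter (S n) (pt_map v i) x) with (pt_map v i (Nat.iter n (pt_map v i) x)).
    rewrite Hiter, vadd_orbit_shift_S. unfold pt_map. rewrite Hin.
    split; [reflexivity|]. rewrite <- Hin. now apply Hmap.
Qed.

Lemma fate_itinerary x : Omega x -> fate v i x = w -> forall n,
  P (w n) (vadd x (orbit_shift v w n)).
Proof.
  intros Hx Hfate n. destruct (fate_orbit x Hx Hfate n) as [Hiter HOn].
  assert (Hn : fate v i x n = w n) by now rewrite Hfate.
  unfold fate in Hn. rewrite Hiter in Hn. rewrite <- Hn. apply Hindex, HOn.
Qed.

Definition interior_itinerary N x : Prop :=
  forall n, (n < N)%nat -> Defs.interior (P (w n)) (vadd x (orbit_shift v w n)).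

Lemma interior_itinerary_open N : is_open (interior_itinerary N).
Proof. apply is_open_finite_inter. intros n _. apply is_open_interior_translate. Qed.

Lemma fate_fiber_split N x : Omega x -> fate v i x = w ->
  interior_itinerary N x \/
  exists n, (n < N)%nat /\ boundary (P (w n)) (vadd x (orbit_shift v w n)).
Proof.
  intros Hx Hfate. destruct (classic (interior_itinerary N x)) as [|Hnot]; [now left|right].
  apply not_all_ex_not in Hnot as [n Hn]. apply imply_to_and in Hn as [HnN Hn].
  exists n. split; [exact HnN|]. apply boundary_of_not_interior; [|exact Hn].
  now apply fate_itinerary.
Qed.

Hypothesis Hinterior : forall k x, (k < m)%nat -> Defs.interior (P k) x -> Omega x /\ i x = k.
Hypothesis Hw : forall n, (w n < m)%nat.

Lemma interior_itinerary_orbit N x n : interior_itinerary N x -> (n < N)%nat ->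
  Omega (vadd x (orbit_shift v w n)) /\ i (vadd x (orbit_shift v w n)) = w n.
Proof. intros Hx Hn. apply Hinterior; auto. Qed.

Lemma interior_itinerary_translates_disjoint N J :
  (forall j l, (j < l)%nat -> (l < J)%nat ->
    exists k, (l + k < N)%nat /\ w (j + k)%nat <> w (l + k)%nat) ->
  forall j l x y, (j < J)%nat -> (l < J)%nat -> j <> l ->
  interior_itinerary N x -> interior_itinerary N y ->
  vadd x (orbit_shift v w j) = vadd y (orbit_shift v w l) -> False.
Proof.
  intros Hsep. assert (Hlt : forall j l x y, (j < l)%nat -> (l < J)%nat ->
    interior_itinerary N x -> interior_itinerary N y ->
    vadd x (orbit_shift v w j) = vadd y (orbit_shift v w l) -> False).
  { intros j l x y Hjl HlJ Hx Hy Hmeet. destruct (Hsep j l Hjl HlJ) as (k & Hk & Hne).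
    apply Hne. apply (orbit_shifts_meet v w i x y j l N); auto; try lia;
      intros n Hn; now apply (interior_itinerary_orbit N). }
  intros j l x y Hj Hl Hjl Hx Hy Hmeet.
  destruct (Nat.lt_total j l) as [Hjl'|[Hjl'|Hlj]]; [| easy |].
  - exact (Hlt j l x y Hjl' Hl Hx Hy Hmeet).
  - exact (Hlt l j y x Hlj Hj Hy Hx (eq_sym Hmeet)).
Qed.

End PiecewiseOrbit.

Theorem lemma2p7 (d m : nat) (Omega : pt d -> Prop) (P : nat -> pt d -> Prop)
  (v : nat -> pt d) (i : pt d -> nat)
  (HF : piecewise_translation Omega m P v i)
  (w : nat -> nat) (Hw : forall n, (w n < m)%nat)
  (Hnp : ~ eventually_periodic w) :
  leb_null (fun x => Omega x /\ fate v i x = w).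
Proof.
  pose proof (piece_interior_index _ _ _ _ _ HF) as Hinterior.
  destruct HF as (HO & _ & _ & _ & Hnull & Hmap & Hindex & _).
  destruct d as [|d]; [exfalso; exact (not_leb_null_dim0 _ (Hnull (w 0%nat) (Hw 0%nat)))|].
  destruct (region_bounded Omega HO) as (M & HM & HOM).
  pose proof (interior_itinerary_orbit Omega m P v i w Hinterior Hw) as Horbit.
  intros eps Heps.
  destruct (exists_nat_div_le ((4 * M + 5) ^ S d) (eps / 2)) as (J & HJ & HCJ); [lra|].
  destruct (not_eventually_periodic_separated w Hnp J) as (N & HJN & Hsep).
  apply (outer_le_subset _ (fun x => interior_itinerary P v w N x \/
      exists n, (n < N)%nat /\ boundary (P (w n)) (vadd x (orbit_shift v w n)))
    eps (eps / 2 + eps / 2)); [| lra | apply outer_le_union].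
  - intros x [Hx Hfate]. exact (fate_fiber_split Omega m P v i w Hindex Hmap N x Hx Hfate).
  - apply (outer_le_subset _ _ _ _ (fun x Hx => Hx) HCJ).
    apply disjoint_translates_outer_le with (T := orbit_shift v w);
      auto using interior_itinerary_open.
    + intros j x Hj Hx k. apply HOM, (Horbit N); [exact Hx | lia].
    + exact (interior_itinerary_translates_disjoint Omega m P v i w Hinterior Hw N J Hsep).
    + intros x Hx k. rewrite <- (vadd_orbit_shift_0 v w x). apply HOM, (Horbit N); [exact Hx | lia].
  - apply leb_null_finite_union; [| lra]. intros n _. now apply leb_null_translate, Hnull.
Qed.
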